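(* Let $R$ satisfy $\{0\}\subsetneq R\subseteq\mathbb Q$ and $r\cdot\mathbb Z\subseteq R$ for every $r\in R$, and let $m\in(\mathbb Z\setminus\{0\})\cap R$. Then for every $b\in R$: $b\neq 0$ if and only if the equation \[ y\cdot b-m^2-\sum_{i=1}^4 y_i^2=0 \] is solvable in $y,y_1,y_2,y_3,y_4\in R$. *)

From HB Require Import structures.
From mathcomp Require Import all_boot all_order all_algebra.
Set Implicit Arguments. Unset Strict Implicit. Unset Printing Implicit Defensive.
Import Order.TTheory GRing.Theory Num.Theory.

From HB Require Import structures.
From mathcomp Require Import all_boot all_order all_algebra.
From mathcomp Require Import zify ring lra.
Set Implicit Arguments. Unset Strict Implicit. Unset Printing Implicit Defensive.
Import Order.TTheory GRing.Theory Num.Theory.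

(* Every positive integer n divides x^2 + y^2 + z^2 + w^2 + 1 for some naturals
   x, y, z, w. For an odd prime p, the p + 1 residues x^2 and -1 - y^2 with
   x, y <= (p - 1)/2 cannot be pairwise distinct, which gives p | x^2 + y^2 + 1;
   Hensel lifting in x reaches every power of p, 1 + 1 + 1 + 4 + 1 = 8 starts a
   similar lifting at powers of 2, and the Chinese remainder theorem combines
   coprime moduli. If b = n/d and c n = x^2 + y^2 + z^2 + w^2 + 1, then the
   multiples y = m (m c d), y_1 = m x, ..., y_4 = m w of m solve the equation.
   Conversely, for b = 0 the equation would make -m^2 a sum of squares. *)

Definition sqsum4S (x y z w : nat) := (x ^ 2 + y ^ 2 + z ^ 2 + w ^ 2 + 1)%N.

Definition dvd_sqsum4S (n : nat) := exists x y z w, (n %| sqsum4S x y z w)%N.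

Lemma sqsum4S_congr d x y z w x' y' z' w' :
  x = x' %[mod d] -> y = y' %[mod d] -> z = z' %[mod d] -> w = w' %[mod d] ->
  sqsum4S x y z w = sqsum4S x' y' z' w' %[mod d].
Proof.
move=> hx hy hz hw.
have modD a b a' b' : a = a' %[mod d] -> b = b' %[mod d] -> a + b = a' + b' %[mod d].
  by move=> ea eb; rewrite -modnDm ea eb modnDm.
have modX a a' : a = a' %[mod d] -> a ^ 2 = a' ^ 2 %[mod d].
  by move=> ea; rewrite -modnXm ea modnXm.
by rewrite /sqsum4S; repeat apply: (modD); try apply: modX.
Qed.

Lemma dvd_sqsum4S_mul a b :
  coprime a b -> dvd_sqsum4S a -> dvd_sqsum4S b -> dvd_sqsum4S (a * b).
Proof.
move=> co_ab [x1 [y1 [z1 [w1 a_dvd]]]] [x2 [y2 [z2 [w2 b_dvd]]]].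
pose crt u v := chinese a b u v.
exists (crt x1 x2), (crt y1 y2), (crt z1 z2), (crt w1 w2).
rewrite Gauss_dvd // /dvdn.
rewrite (sqsum4S_congr (chinese_modl co_ab _ _) (chinese_modl co_ab _ _)
  (chinese_modl co_ab _ _) (chinese_modl co_ab _ _)).
by rewrite (sqsum4S_congr (chinese_modr co_ab _ _) (chinese_modr co_ab _ _)
  (chinese_modr co_ab _ _) (chinese_modr co_ab _ _)) -!/(dvdn _ _) a_dvd b_dvd.
Qed.

Lemma sqr_inj_mod p a b : prime p -> (2 * a < p)%N -> (2 * b < p)%N ->
  a ^ 2 = b ^ 2 %[mod p] -> a = b.
Proof.
move=> p_pr.
wlog le_ab : a b / (a <= b)%N.
  by move=> sym ha hb e; case: (leqP a b) => [|/ltnW] le; [|symmetry]; apply: sym.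
move=> ha hb e; case: (ltngtP a b) => [lt_ab|gt_ab|//]; last lia.
have : (p %| b ^ 2 - a ^ 2)%N by rewrite -eqn_mod_dvd ?leq_exp2r // e.
rewrite subn_sqr Euclid_dvdM // => /orP [] /dvdn_leq; lia.
Qed.

Lemma prime_dvd_sqr_add_sqrS p : prime p -> exists x y, (p %| x ^ 2 + y ^ 2 + 1)%N.
Proof.
move=> p_pr; have [->|p_odd] := even_prime p_pr; first by exists 1%N, 0%N.
have p_gt0 := prime_gt0 p_pr.
have small (u : 'I_(p./2).+1) : (2 * u < p)%N.
  by rewrite -[p in (_ < p)%N]odd_double_half p_odd; have := ltn_ord u; lia.
(* the residue of -1 - y^2 modulo p *)
pose oppS y := (p - y ^ 2 %% p).-1.
have oppS_lt y : (oppS y < p)%N by rewrite /oppS; lia.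
have dvd_of_eq x y : x ^ 2 %% p = oppS y -> (p %| x ^ 2 + y ^ 2 + 1)%N.
  move=> e; have y2_lt := ltn_pmod (y ^ 2) p_gt0.
  rewrite /dvdn -addnA -modnDml e /oppS {2}(divn_eq (y ^ 2) p).
  have -> : ((p - y ^ 2 %% p).-1 + (y ^ 2 %/ p * p + y ^ 2 %% p + 1) =
            (y ^ 2 %/ p).+1 * p)%N by rewrite mulSn; lia.
  by rewrite modnMl.
pose f (u : 'I_(p./2).+1 + 'I_(p./2).+1) : 'I_p :=
  match u with
  | inl x => Ordinal (ltn_pmod (x ^ 2) p_gt0)
  | inr y => Ordinal (oppS_lt y)
  end.
have /injectivePn [[x|y] [[x'|y'] neq /(congr1 val) /= e]] : ~~ injectiveb f.
  by apply/injectiveP => /leq_card; rewrite card_sum !card_ord; lia.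
- by case/eqP: neq; congr inl; apply: val_inj; exact: sqr_inj_mod p_pr (small x) (small x') e.
- by exists x, y'; exact: dvd_of_eq.
- by exists x', y; exact: dvd_of_eq.
- case/eqP: neq; congr inr; apply: val_inj; apply: (sqr_inj_mod p_pr (small y) (small y')).
  move: e (ltn_pmod (y ^ 2) p_gt0) (ltn_pmod (y' ^ 2) p_gt0); rewrite /oppS.
  by move: (y ^ 2 %% p) (y' ^ 2 %% p) => r r'; lia.
Qed.

Lemma sqsum4S_shift x y z w d :
  sqsum4S (x + d) y z w = (sqsum4S x y z w + d * (2 * x + d))%N.
Proof. by rewrite /sqsum4S; ring. Qed.

Lemma dvd_sqsum4S_trans m n : (m %| n)%N -> dvd_sqsum4S n -> dvd_sqsum4S m.
Proof.
by move=> m_dvd_n [x [y [z [w n_dvd]]]]; exists x, y, z, w; exact: dvdn_trans n_dvd.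
Qed.

Lemma sqsum4S_lift p k x y z w : (0 < p)%N -> coprime p (2 * x) ->
  (p ^ k.+1 %| sqsum4S x y z w)%N ->
  exists t, (p ^ k.+2 %| sqsum4S (x + t * p ^ k.+1) y z w)%N.
Proof.
move=> p_gt0 co_p2x /dvdnP [c S4_eq].
have [a _] := Bezoutl (2 * x) p_gt0; rewrite (eqP co_p2x) => p_dvd.
exists (a * c); rewrite sqsum4S_shift S4_eq.
have -> : (c * p ^ k.+1 + a * c * p ^ k.+1 * (2 * x + a * c * p ^ k.+1) =
           p ^ k.+1 * (c * (1 + a * (2 * x)) + (a * c) ^ 2 * p ^ k.+1))%N by ring.
by rewrite expnSr dvdn_pmul2l ?expn_gt0 ?p_gt0 // dvdn_add ?dvdn_mull ?dvdn_exp.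
Qed.

Lemma sqsum4S_lift2 k x y z w : odd x -> (2 ^ k.+3 %| sqsum4S x y z w)%N ->
  exists x', odd x' /\ (2 ^ k.+4 %| sqsum4S x' y z w)%N.
Proof.
move=> x_odd /dvdnP [c S4_eq].
have [c_odd|c_even] := boolP (odd c); last first.
  exists x; split => //; rewrite S4_eq (expnS 2 k.+3).
  by rewrite dvdn_pmul2r ?expn_gt0 // dvdn2.
exists (x + 2 ^ k.+2); split; first by rewrite oddD oddX /= x_odd.
rewrite sqsum4S_shift S4_eq.
have -> : (c * 2 ^ k.+3 + 2 ^ k.+2 * (2 * x + 2 ^ k.+2) =
           2 ^ k.+3 * (c + x + 2 ^ k.+1))%N by rewrite !expnS; ring.
rewrite (expnS 2 k.+3) (mulnC 2) dvdn_pmul2l ?expn_gt0 //.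
by rewrite dvdn2 !oddD oddX /= c_odd x_odd.
Qed.

Lemma dvd_sqsum4S_2pow k : dvd_sqsum4S (2 ^ k).
Proof.
suff [x [y [z [w [_ dvd]]]]] : exists x y z w, odd x /\ (2 ^ k.+3 %| sqsum4S x y z w)%N.
  by apply: dvd_sqsum4S_trans (dvdn_exp2l 2 (leq_addl 3 k)) _; exists x, y, z, w.
elim: k => [|k [x [y [z [w [x_odd dvd]]]]]]; first by exists 1%N, 1%N, 1%N, 2%N.
by have [x' [x'_odd dvd']] := sqsum4S_lift2 x_odd dvd; exists x', y, z, w.
Qed.

Lemma dvd_sqsum4S_odd_prime_pow p k : prime p -> odd p -> dvd_sqsum4S (p ^ k).
Proof.
move=> p_pr p_odd.
have co_p2x x : ~~ (p %| x)%N -> coprime p (2 * x).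
  rewrite coprimeMr !prime_coprime // (@dvdn_prime2 p 2) // => ->; rewrite andbT.
  by apply: contraL p_odd => /eqP ->.
suff [x [y [z [w [_ dvd]]]]] : exists x y z w, ~~ (p %| x)%N /\ (p ^ k.+1 %| sqsum4S x y z w)%N.
  by apply: dvd_sqsum4S_trans (dvdn_exp2l p (leqnSn k)) _; exists x, y, z, w.
elim: k => [|k [x [y [z [w [p_ndvd_x dvd]]]]]].
  have [x [y dvd]] := prime_dvd_sqr_add_sqrS p_pr.
  have S4_eq u v : sqsum4S u v 0 0 = (u ^ 2 + v ^ 2 + 1)%N by rewrite /sqsum4S !addn0.
  have [p_dvd_x|p_ndvd_x] := boolP (p %| x)%N; last by exists x, y, 0%N, 0%N; rewrite S4_eq expn1.
  exists y, x, 0%N, 0%N; rewrite S4_eq expn1 (addnC (y ^ 2)) dvd; split => //.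
  apply: contraL dvd => p_dvd_y; rewrite -addnA dvdn_addr ?dvdn_exp // dvdn_addr ?dvdn_exp //.
  by rewrite dvdn1; case: eqP (prime_gt1 p_pr) => // ->.
have [t dvd'] := sqsum4S_lift (prime_gt0 p_pr) (co_p2x x p_ndvd_x) dvd.
exists (x + t * p ^ k.+1), y, z, w; split => //.
by rewrite dvdn_addl ?dvdn_mull ?dvdn_exp.
Qed.

Lemma dvd_sqsum4S_prime_pow p k : prime p -> dvd_sqsum4S (p ^ k).
Proof.
move=> p_pr; have [->|p_odd] := even_prime p_pr; first exact: dvd_sqsum4S_2pow.
exact: dvd_sqsum4S_odd_prime_pow.
Qed.

Lemma dvd_sqsum4S_pos n : (0 < n)%N -> dvd_sqsum4S n.
Proof.
elim/ltn_ind: n => n IH n_gt0; have [n_le1|n_gt1] := leqP n 1.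
  by apply: dvd_sqsum4S_trans (dvd_sqsum4S_2pow 0); rewrite expn0 dvdn1 eqn_leq n_le1.
pose p := pdiv n; have p_pr : prime p := pdiv_prime n_gt1.
have [n' co_pn' n_eq] := pfactor_coprime p_pr n_gt0.
have pk_gt1 : (1 < p ^ logn p n)%N.
  by rewrite -{1}(expn0 p) ltn_exp2l ?prime_gt1 // logn_gt0 mem_primes p_pr n_gt0 pdiv_dvd.
have n'_gt0 : (0 < n')%N by move: n_gt0; rewrite n_eq muln_gt0 => /andP [].
rewrite n_eq; apply: dvd_sqsum4S_mul.
- by rewrite coprime_sym coprimeXl.
- by apply: IH => //; rewrite [X in (_ < X)%N]n_eq -{1}(muln1 n') ltn_pmul2l.
- exact: dvd_sqsum4S_prime_pow.
Qed.

Local Open Scope ring_scope.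

Lemma numq_dvd_sqsum4S (b : rat) : b != 0 ->
  exists x y z w, (numq b %| (sqsum4S x y z w)%:Z)%Z.
Proof.
rewrite -numq_eq0 -absz_gt0 => /dvd_sqsum4S_pos [x [y [z [w dvd]]]].
by exists x, y, z, w; rewrite dvdzE.
Qed.

Lemma sqsum4S_scaled_solution (b : rat) (m c : int) x y z w :
  (sqsum4S x y z w)%:Z = c * numq b ->
  m%:~R * (m * c * denq b)%:~R * b - m%:~R ^+ 2 -
  ((m%:~R * x%:R) ^+ 2 + (m%:~R * y%:R) ^+ 2 + (m%:~R * z%:R) ^+ 2 +
   (m%:~R * w%:R) ^+ 2) = 0.
Proof.
move=> S4_eq; have den_neq0 : (denq b)%:~R != 0 :> rat by rewrite intr_eq0 denq_neq0.
have S4_rat : c%:~R * (numq b)%:~R = (sqsum4S x y z w)%:R :> rat.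
  by rewrite -intrM -S4_eq.
move: den_neq0 S4_rat (esym (divq_num_den b)).
move: (numq b) (denq b) => n d den_neq0 S4_rat ->.
transitivity ((m%:~R : rat) ^+ 2 * (c%:~R * n%:~R - (sqsum4S x y z w)%:R)).
  by rewrite /sqsum4S !natrD !natrX !intrM; field.
by rewrite S4_rat subrr mulr0.
Qed.

Theorem lemma4 (R : rat -> Prop)
  (hR0 : R 0) (hRnz : exists r : rat, R r /\ r != 0)
  (hRZ : forall (r : rat) (z : int), R r -> R (r * z%:~R))
  (m : int) (hm0 : m != 0) (hmR : R (m%:~R)) :
  forall b : rat, R b ->
    (b != 0 <->
     exists y y1 y2 y3 y4 : rat,
       [/\ R y, R y1, R y2, R y3 & R y4] /\
       y * b - (m%:~R) ^+ 2 - (y1 ^+ 2 + y2 ^+ 2 + y3 ^+ 2 + y4 ^+ 2) = 0).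
Proof.
move=> b _; split=> [b_neq0|]; last first.
  case=> [y [y1 [y2 [y3 [y4 [_]]]]]]; apply: contra_eqN => /eqP ->.
  have m2_gt0 : 0 < (m%:~R : rat) ^+ 2 by rewrite exprn_even_gt0 ?intr_eq0.
  have := sqr_ge0 y1; have := sqr_ge0 y2; have := sqr_ge0 y3; have := sqr_ge0 y4.
  by rewrite mulr0; lra.
have [x [y [z [w /dvdzP [c S4_eq]]]]] := numq_dvd_sqsum4S b_neq0.
exists (m%:~R * (m * c * denq b)%:~R), (m%:~R * x%:R), (m%:~R * y%:R),
  (m%:~R * z%:R), (m%:~R * w%:R).
split; last exact: sqsum4S_scaled_solution.
by split; [exact: hRZ | exact: hRZ _ x hmR | exact: hRZ _ y hmR
  | exact: hRZ _ z hmR | exact: hRZ _ w hmR].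
Qed.
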